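(* Let $h>0$ and $f\in H^\omega(X)\cap L_1(X)$. Then \[ \|f\|_{\mathcal B(X)}\le\frac{\|f\|_{H^\omega(X)}}{\mu(B_h)}\int_{B_h}\omega(\rho(u,\theta))\,d\mu(u)+\frac{\|f\|_{L_1(X)}}{\mu(B_h)}. \] The inequality is sharp: it becomes an equality for $f_{e,h}(x)=(\omega(h)-\omega(\rho(x,\theta)))_+$.
   Context: Standing setting: $(X,\rho)$ is a metric space with a Borel measure $\mu$. $X$ is a commutative monoid, i.e. there is an associative and commutative binary operation $+$ on $X$ with a neutral element $\theta$. The measure is translation invariant: $\mu(x+Q)=\mu(Q)$ for every $\mu$-measurable $Q\subset X$ and every $x\in X$; correspondingly $\int_{B_h}g(x+u)\,d\mu(u)=\int_{x+B_h}g(u)\,d\mu(u)$ for locally integrable $g$. Moreover $\rho(x+y,x)\le\rho(y,\theta)$ for all $x,y\in X$. $B_h$ denotes the open ball of radius $h$ centered at $\theta$, and it is assumed that $0<\mu(B_h)<\infty$ and $B_h\neq\{\theta\}$ for every $h>0$. Every continuous real function on $X$ is integrable on every open ball. For a function $f$, $\|f\|_{\mathcal B(X)}=\sup_{x\in X}|f(x)|$; $L_1(X)$ is the space of $\mu$-integrable functions with the usual norm. $\alpha_+=\max\{\alpha,0\}$. A modulus of continuity is a function $\omega\colon[0,\infty)\to[0,\infty)$ that is non-decreasing, semi-additive ($\omega(s+t)\le\omega(s)+\omega(t)$), with $\omega(0)=0$, and not identically zero. $H^\omega(X)$ is the space of $f\colon X\to\mathbb R$ with $\|f\|_{H^\omega(X)}:=\sup_{x\neq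 y}\frac{|f(x)-f(y)|}{\omega(\rho(x,y))}<\infty$. *)

From HB Require Import structures.
From mathcomp Require Import all_boot all_order all_algebra.
From mathcomp Require Import all_classical all_reals all_analysis.
Set Implicit Arguments. Unset Strict Implicit. Unset Printing Implicit Defensive.
Import Order.TTheory GRing.Theory Num.Theory.
Local Open Scope classical_set_scope.
Local Open Scope ring_scope.

Section Defs.
Context {R : realType} {X : Type}.

Definition is_metric (rho : X -> X -> R) : Prop :=
  (forall x y, 0 <= rho x y) /\
  (forall x y, rho x y = 0 <-> x = y) /\
  (forall x y, rho x y = rho y x) /\
  (forall x y z, rho x z <= rho x y + rho y z).

Definition rball (rho : X -> X -> R) (x : X) (r : R) : set X :=
  [set y | rho x y < r].

Definition rho_open (rho : X -> X -> R) (A : set X) : Prop :=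
  forall x, A x -> exists2 e : R, 0 < e & rball rho x e `<=` A.

Definition rho_continuous (rho : X -> X -> R) (g : X -> R) : Prop :=
  forall x (e : R), 0 < e -> exists2 d : R, 0 < d &
    forall y, rho x y < d -> `|g x - g y| < e.

Definition is_comm_monoid (add : X -> X -> X) (theta : X) : Prop :=
  (forall x y z, add x (add y z) = add (add x y) z) /\
  (forall x y, add x y = add y x) /\
  (forall x, add theta x = x).

Definition translate (add : X -> X -> X) (x : X) (Q : set X) : set X :=
  [set add x u | u in Q].

Definition is_modulus (omega : R -> R) : Prop :=
  omega 0 = 0 /\
  (forall t, 0 <= t -> 0 <= omega t) /\
  (forall s t, 0 <= s -> s <= t -> omega s <= omega t) /\
  (forall s t, 0 <= s -> 0 <= t -> omega (s + t) <= omega s + omega t) /\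
  (exists2 t, 0 <= t & omega t <> 0).

Definition Hnorm (rho : X -> X -> R) (omega : R -> R) (f : X -> R) : \bar R :=
  ereal_sup [set z : \bar R | exists x y, x <> y /\
      z = (`|f x - f y| / omega (rho x y))%:E].

Definition in_H (rho : X -> X -> R) (omega : R -> R) (f : X -> R) : Prop :=
  (Hnorm rho omega f < +oo)%E.

Definition supnorm (f : X -> R) : \bar R :=
  ereal_sup (range (fun x => (`|f x|)%:E)).

End Defs.

Definition L1norm {R : realType} {d : measure_display} {X : measurableType d}
  (mu : {measure set X -> \bar R}) (f : X -> R) : \bar R :=
  (\int[mu]_x (`|f x|)%:E)%E.

From HB Require Import structures.
From mathcomp Require Import all_boot all_order all_algebra.
From mathcomp Require Import all_classical all_reals all_analysis.
From mathcomp Require Import ring lra measurable_realfun.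
Import Order.TTheory GRing.Theory Num.Theory.
Local Open Scope classical_set_scope.
Local Open Scope ring_scope.

(* Write B for the ball B_h around theta and w u := omega (rho u theta).
   Upper bound: if |f x - f y| <= c omega (rho x y) then for u in B
     |f x| <= |f (x + u)| + c omega (rho (x + u) x) <= |f (x + u)| + c w u;
   integrating over B and using translation invariance of the integral gives
     mu(B) |f x| <= c \int_B w + \int_{x + B} |f| <= c \int_B w + ||f||_1,
   and dividing by mu(B) and taking the supremum over x gives the estimate
   with c = ||f||_{H^omega}.
   Sharpness: the bump fe x = (omega h - w x)_+ vanishes outside B, satisfies
   fe + w = omega h on B, is omega-Lipschitz with constant exactly 1 (the
   ratio at a point x0 <> theta of B and theta equals 1), and attains its
   supremum omega h at theta; hence ||fe||_1 = omega h mu(B) - \int_B w and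
   both sides of the estimate equal omega h. *)

Section MetricFacts.
Context {R : realType} {X : Type} {rho : X -> X -> R}.
Hypothesis rho_metric : is_metric rho.

Lemma rho_ge0 x y : 0 <= rho x y.
Proof. by case: rho_metric. Qed.

Lemma rho_xx x : rho x x = 0.
Proof. by case: rho_metric => _ [req _]; apply/req. Qed.

Lemma rho_gt0 x y : x <> y -> 0 < rho x y.
Proof.
move=> xy; rewrite lt0r rho_ge0 andbT; apply/eqP => rxy.
by case: rho_metric => _ [req _]; apply/xy/req.
Qed.

Lemma rhoC x y : rho x y = rho y x.
Proof. by case: rho_metric => _ [_ [rho_sym _]]. Qed.

Lemma rho_triangle x y z : rho x z <= rho x y + rho y z.
Proof. by case: rho_metric => _ [_ [_ rho_tri]]. Qed.

End MetricFacts.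

Section ModulusFacts.
Context {R : realType} {omega : R -> R}.
Hypothesis omega_modulus : is_modulus omega.

Lemma modulus0 : omega 0 = 0.
Proof. by case: omega_modulus. Qed.

Lemma modulus_ge0 t : 0 <= t -> 0 <= omega t.
Proof. by case: omega_modulus => _ [om_ge0 _]; apply: om_ge0. Qed.

Lemma modulus_mono {s t} : 0 <= s -> s <= t -> omega s <= omega t.
Proof. by case: omega_modulus => _ [_ [om_mono _]]; apply: om_mono. Qed.

Lemma modulus_subadd {s t} : 0 <= s -> 0 <= t -> omega (s + t) <= omega s + omega t.
Proof. by case: omega_modulus => _ [_ [_ [om_subadd _]]]; apply: om_subadd. Qed.

(* A modulus of continuity vanishes only at 0: if omega t = 0 for some t > 0,
   subadditivity forces omega (n t) = 0 for all n, and by monotonicity omega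
   would vanish identically. *)
Lemma modulus_gt0 t : 0 < t -> 0 < omega t.
Proof.
move=> t_gt0; rewrite lt0r modulus_ge0 ?ltW // andbT; apply/eqP => omt.
have omega_nt_le0 (n : nat) : omega (n%:R * t) <= 0.
  elim: n => [|n IH]; first by rewrite mul0r modulus0.
  have -> : n.+1%:R * t = n%:R * t + t by rewrite -nat1r mulrDl mul1r addrC.
  have nt_ge0 : 0 <= n%:R * t by rewrite mulr_ge0 // ltW.
  apply: le_trans (modulus_subadd nt_ge0 (ltW t_gt0)) _.
  by rewrite omt addr0.
case: omega_modulus => _ [_ [_ [_ [s s_ge0 oms]]]]; apply: oms.
apply/eqP; rewrite eq_le modulus_ge0 // andbT.
apply: le_trans (omega_nt_le0 (Num.Def.trunc (s / t)).+1).
apply: modulus_mono => //; apply: ltW.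
by rewrite -ltr_pdivrMr // truncnS_gt.
Qed.

Lemma modulus_rho_triangle {X : Type} {rho : X -> X -> R} :
  is_metric rho -> forall x y z,
  omega (rho x z) <= omega (rho x y) + omega (rho y z).
Proof.
move=> rho_metric x y z.
apply: le_trans _ (modulus_subadd (rho_ge0 rho_metric _ _) (rho_ge0 rho_metric _ _)).
exact: modulus_mono (rho_ge0 rho_metric _ _) (rho_triangle rho_metric _ _ _).
Qed.

End ModulusFacts.

Lemma max0_lipschitz {R : realType} (a b : R) :
  `|Num.max a 0 - Num.max b 0| <= `|a - b|.
Proof.
have := ler_norm (a - b); have := ler_norm (b - a); rewrite distrC => h1 h2.
rewrite ler_norml; apply/andP.
by case: (lerP a 0) => ha; case: (lerP b 0) => hb; split; lra.
Qed.

Section HoelderSeminorm.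
Context {R : realType} {X : Type} {rho : X -> X -> R} {omega : R -> R}.
Hypothesis rho_metric : is_metric rho.
Hypothesis omega_modulus : is_modulus omega.
Variable f : X -> R.

Lemma Hnorm_ub {x y : X} : x <> y ->
  ((`|f x - f y| / omega (rho x y))%:E <= Hnorm rho omega f)%E.
Proof. by move=> xy; apply: ereal_sup_ubound; exists x, y. Qed.

Lemma Hnorm_ge0 {x y : X} : x <> y -> (0 <= Hnorm rho omega f)%E.
Proof.
move=> xy; apply: le_trans _ (Hnorm_ub xy).
by rewrite lee_fin divr_ge0 // modulus_ge0 // rho_ge0.
Qed.

Lemma Hnorm_lipschitz {c : R} : Hnorm rho omega f = c%:E ->
  forall x y, `|f x - f y| <= c * omega (rho x y).
Proof.
move=> Hf x y; have [<-|xy] := pselect (x = y).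
  by rewrite subrr normr0 rho_xx // modulus0 // mulr0.
rewrite -ler_pdivrMr ?modulus_gt0 ?rho_gt0 // -lee_fin -Hf.
exact: Hnorm_ub.
Qed.

Lemma Hnorm_le (c : R) : (forall x y, `|f x - f y| <= c * omega (rho x y)) ->
  (Hnorm rho omega f <= c%:E)%E.
Proof.
move=> f_lip; apply: ge_ereal_sup => _ [x [y [xy ->]]].
by rewrite lee_fin ler_pdivrMr ?modulus_gt0 ?rho_gt0.
Qed.

End HoelderSeminorm.

Section BorelMeasurability.
Context {R : realType} {d : measure_display} {X : measurableType d}
  {rho : X -> X -> R}.
Hypothesis rho_metric : is_metric rho.
Hypothesis rho_borel : (@measurable d X) = <<s rho_open rho >>.

Lemma measurable_rball x r : measurable (rball rho x r).
Proof.
rewrite rho_borel; apply: sub_sigma_algebra => y /= rxy.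
exists (r - rho x y); first by rewrite subr_gt0.
move=> z /= ryz; rewrite /rball /=.
by apply: le_lt_trans (rho_triangle rho_metric x y z) _; rewrite -ltrBrDl.
Qed.

(* Sublevel sets of the distance to th are balls, hence Borel. *)
Lemma measurable_rho_to (D : set X) th : measurable D ->
  measurable_fun D (fun u => rho u th).
Proof.
move=> mD; apply: (measurability (@RGenInftyO.G R)) => [|/= _ [_] [r] -> <-].
  exact: RGenInftyO.measurableE.
apply: measurableI => //.
have -> : (fun u => rho u th) @^-1` `]-oo, r[ = rball rho th r.
  by apply/seteqP; split => u /=; rewrite in_itv /= rhoC.
exact: measurable_rball.
Qed.

Lemma measurable_mono_rho (D : set X) th (om : R -> R) : measurable D ->
  (forall s t, 0 <= s -> s <= t -> om s <= om t) ->
  measurable_fun D (fun u => om (rho u th)).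
Proof.
move=> mD om_mono; pose om' t := om (Num.max t 0).
have -> : (fun u => om (rho u th)) = om' \o (fun u => rho u th).
  by apply/funext => u /=; rewrite /om' max_l // rho_ge0.
apply: measurableT_comp; last exact: measurable_rho_to.
apply: nondecreasing_measurable => // s t st; apply: om_mono.
  by rewrite le_max lexx orbT.
by rewrite ge_max !le_max st lexx !orbT.
Qed.

End BorelMeasurability.

Definition extremal {R : realType} {X : Type} (rho : X -> X -> R) (theta : X)
  (omega : R -> R) (h : R) (x : X) : R :=
  Num.max (omega h - omega (rho x theta)) 0.

Section SupnormEstimate.
Context {R : realType} {d : measure_display} {X : measurableType d}
  {rho : X -> X -> R} {add : X -> X -> X} {theta : X}
  {mu : {measure set X -> \bar R}} {omega : R -> R}.
Hypothesis rho_metric : is_metric rho.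
Hypothesis rho_borel : (@measurable d X) = <<s rho_open rho >>.
Hypothesis omega_modulus : is_modulus omega.
Hypothesis translate_measurable :
  forall x Q, measurable Q -> measurable (translate add x Q).
Hypothesis translate_integral : forall (g : X -> R),
  (forall y r, 0 < r -> mu.-integrable (rball rho y r) (EFin \o g)) ->
  forall x r, 0 < r ->
    mu.-integrable (rball rho theta r) (fun u => (g (add x u))%:E) /\
    (\int[mu]_(u in rball rho theta r) (g (add x u))%:E =
     \int[mu]_(u in translate add x (rball rho theta r)) (g u)%:E)%E.
Hypothesis dist_translate : forall x y, rho (add x y) x <= rho y theta.
Context {h : R}.
Hypothesis h_gt0 : 0 < h.

Local Notation B := (rball rho theta h).

Let measurable_B : measurable B.
Proof. exact: measurable_rball rho_metric rho_borel theta h. Qed.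

Let measurable_modulus (D : set X) : measurable D ->
  measurable_fun D (fun u => omega (rho u theta)).
Proof.
move=> mD; apply: measurable_mono_rho rho_metric rho_borel D theta omega mD _.
exact: modulus_mono.
Qed.

(* Integrated form of |f x| <= |f (x + u)| + c omega (rho u theta) over u in B,
   combined with translation invariance of the integral:
   mu(B) |f x| <= c \int_B omega (rho u theta) + ||f||_1. *)
Lemma translation_bound (f : X -> R) (c : R) (x : X) : 0 <= c ->
  (forall y z, `|f y - f z| <= c * omega (rho y z)) ->
  mu.-integrable setT (EFin \o f) ->
  (\int[mu]_(u in B) (`|f x|)%:E <=
   c%:E * \int[mu]_(u in B) (omega (rho u theta))%:E + L1norm mu f)%E.
Proof.
move=> c_ge0 f_lip f_int.
have absf_int y r : 0 < r ->
    mu.-integrable (rball rho y r) (EFin \o (fun y => `|f y|)).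
  move=> _; have mball := measurable_rball rho_metric rho_borel y r.
  by apply: integrableS measurableT mball _ _ => //; exact: integrable_norm.
have [/integrableP [mabsf_shift _] absf_shift] :=
  translate_integral _ absf_int x h h_gt0.
have shiftE : (\int[mu]_(u in B) (`|f (add x u)|)%:E =
    \int[mu]_(u in translate add x B) (`|f u|)%:E)%E := absf_shift.
have mcw : measurable_fun B (fun u => (c * omega (rho u theta))%:E).
  by apply/measurable_EFinP; apply: measurable_funM => //; exact: measurable_modulus.
have pointwise u : B u ->
    `|f x| <= `|f (add x u)| + c * omega (rho u theta).
  move=> _; have -> : f x = f (add x u) - (f (add x u) - f x) by ring.
  apply: le_trans (ler_normB _ _) _; rewrite lerD2l.
  apply: le_trans (f_lip _ _) _; apply: ler_wpM2l => //.
  exact: modulus_mono (rho_ge0 rho_metric _ _) (dist_translate _ _).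
have integrated : (\int[mu]_(u in B) (`|f x|)%:E <= \int[mu]_(u in B)
    ((`|f (add x u)|)%:E + (c * omega (rho u theta))%:E))%E.
  apply: ge0_le_integral => [//|u _|//||u Bu].
  - by rewrite lee_fin.
  - exact: emeasurable_funD.
  - by rewrite -EFinD lee_fin pointwise.
apply: le_trans integrated _.
rewrite ge0_integralD //; last first.
  by move=> u _; rewrite lee_fin mulr_ge0 // modulus_ge0 // rho_ge0.
rewrite [X in (_ + X <= _)%E](eq_integral
    (fun u => c%:E * (omega (rho u theta))%:E)%E); last by move=> u _; rewrite EFinM.
rewrite ge0_integralZl_EFin //; first last.
- by apply/measurable_EFinP; exact: measurable_modulus.
- by move=> u _; rewrite lee_fin modulus_ge0 // rho_ge0.
rewrite addeC leeD2l // shiftE.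
have /integrableP [mf _] := f_int.
apply: ge0_subset_integral => //; first exact: translate_measurable.
by apply/measurable_EFinP; apply: measurableT_comp => //; apply/measurable_EFinP.
Qed.

Hypothesis ball_gt0 : (0 < mu B)%E.
Hypothesis ball_finite : (mu B < +oo)%E.
Hypothesis ball_nontrivial : B <> [set theta].

Local Notation muB := (fine (mu B)).
Local Notation IB := (fine (\int[mu]_(u in B) (omega (rho u theta))%:E)).

Lemma ball_measureE : mu B = muB%:E.
Proof. by rewrite fineK // ge0_fin_numE // measure_ge0. Qed.

Lemma ball_measure_gt0 : 0 < muB.
Proof. by rewrite -lte_fin -ball_measureE. Qed.

(* B <> {theta} yields a point x0 <> theta of B; the Hoelder ratio of the
   extremal function is attained at (x0, theta). *)
Lemma ball_has_point : exists2 x0, B x0 & x0 <> theta.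
Proof.
apply: contrapT => no_point; apply: ball_nontrivial.
apply/seteqP; split => [y By|y ->]; last by rewrite /rball /= rho_xx.
by apply: contrapT => y_theta; apply: no_point; exists y.
Qed.

Lemma integral_modulus_ball_le :
  (\int[mu]_(u in B) (omega (rho u theta))%:E <= (omega h * muB)%:E)%E.
Proof.
rewrite EFinM -ball_measureE -integral_cst //.
apply: ge0_le_integral => [//|u _||//|u Bu].
- by rewrite lee_fin modulus_ge0 // rho_ge0.
- by apply/measurable_EFinP; exact: measurable_modulus.
- rewrite lee_fin (rhoC rho_metric) (modulus_mono omega_modulus) //.
  + exact: rho_ge0 rho_metric _ _.
  + exact: ltW.
Qed.

Lemma integral_modulus_ballE :
  (\int[mu]_(u in B) (omega (rho u theta))%:E = IB%:E)%E.
Proof.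
have I_ge0 : (0 <= \int[mu]_(u in B) (omega (rho u theta))%:E)%E.
  by apply: integral_ge0 => u _; rewrite lee_fin modulus_ge0 // rho_ge0.
rewrite fineK // ge0_fin_numE //.
exact: le_lt_trans integral_modulus_ball_le (ltry _).
Qed.

Lemma supnorm_estimate (f : X -> R) :
  in_H rho omega f -> mu.-integrable setT (EFin \o f) ->
  (supnorm f <= Hnorm rho omega f * (muB^-1)%:E *
     \int[mu]_(u in B) (omega (rho u theta))%:E + L1norm mu f * (muB^-1)%:E)%E.
Proof.
move=> f_H f_int.
have [x0 _ x0_theta] := ball_has_point.
have Hf_ge0 := Hnorm_ge0 rho_metric omega_modulus f x0_theta.
have HfE : Hnorm rho omega f = (fine (Hnorm rho omega f))%:E.
  by rewrite fineK // ge0_fin_numE.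
have L1E : L1norm mu f = (fine (L1norm mu f))%:E.
  have /integrableP [_ L1_fin] := f_int.
  by rewrite fineK // ge0_fin_numE // integral_ge0.
have f_lip := Hnorm_lipschitz rho_metric omega_modulus f HfE.
rewrite HfE L1E integral_modulus_ballE -!EFinM -EFinD.
set c := fine (Hnorm rho omega f) in HfE f_lip *.
set L := fine (L1norm mu f) in L1E *.
apply: ge_ereal_sup => _ [x _ <-].
rewrite lee_fin -(ler_pM2r ball_measure_gt0).
have -> : (c * muB^-1 * IB + L * muB^-1) * muB = c * IB + L.
  by field; exact: lt0r_neq0 ball_measure_gt0.
rewrite -lee_fin EFinD !EFinM -ball_measureE -integral_cst //.
rewrite -integral_modulus_ballE -L1E.
by apply: translation_bound f_lip f_int; rewrite -lee_fin -HfE.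
Qed.

Local Notation fe := (extremal rho theta omega h).

Lemma extremal_ge0 x : 0 <= fe x.
Proof. by rewrite /extremal le_max lexx orbT. Qed.

Lemma extremal_le x : fe x <= omega h.
Proof.
rewrite /extremal ge_max gerBl modulus_ge0 ?rho_ge0 //=.
by rewrite modulus_ge0 // ltW.
Qed.

Lemma extremal_theta : fe theta = omega h.
Proof. by rewrite /extremal rho_xx // modulus0 // subr0 max_l // modulus_ge0 // ltW. Qed.

Lemma extremal_out x : ~ B x -> fe x = 0.
Proof.
move=> Bx_n; rewrite /extremal max_r // subr_le0.
apply: (modulus_mono omega_modulus (ltW h_gt0)).
by rewrite (rhoC rho_metric) leNgt; apply/negP.
Qed.

Lemma extremal_in x : B x -> fe x + omega (rho x theta) = omega h.
Proof.
move=> Bx; rewrite /extremal max_l ?subrK // subr_ge0 (rhoC rho_metric).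
by apply: (modulus_mono omega_modulus) (ltW Bx); exact: rho_ge0 rho_metric _ _.
Qed.

Lemma extremal_lipschitz x y : `|fe x - fe y| <= omega (rho x y).
Proof.
apply: le_trans (max0_lipschitz _ _) _.
have := modulus_rho_triangle omega_modulus rho_metric x y theta.
have := modulus_rho_triangle omega_modulus rho_metric y x theta.
by rewrite (rhoC rho_metric y x) ler_norml => ? ?; apply/andP; split; lra.
Qed.

(* The constant 1 is attained by the ratio at x0 and theta, for any x0 <> theta
   in B. *)
Lemma Hnorm_extremal : Hnorm rho omega fe = 1%:E.
Proof.
apply/le_anti/andP; split.
  apply: (Hnorm_le rho_metric omega_modulus) => x y.
  by rewrite mul1r extremal_lipschitz.
have [x0 Bx0 x0_theta] := ball_has_point.
apply: le_trans _ (Hnorm_ub fe x0_theta).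
rewrite extremal_theta -(extremal_in x0 Bx0) opprD addrA subrr add0r normrN.
rewrite ger0_norm ?modulus_ge0 ?rho_ge0 // divff // gt_eqF //.
by rewrite modulus_gt0 // rho_gt0.
Qed.

Lemma measurable_extremal : measurable_fun setT fe.
Proof.
apply: measurable_maxr; last exact: measurable_cst.
by apply: measurable_funB; [exact: measurable_cst | exact: measurable_modulus].
Qed.

(* On B the bump and omega (rho . theta) add up to omega h, so
   ||fe||_1 = omega h mu(B) - \int_B omega (rho u theta). *)
Lemma L1norm_extremal : L1norm mu fe = (omega h * muB - IB)%:E.
Proof.
have L1B : L1norm mu fe = (\int[mu]_(x in B) (fe x)%:E)%E.
  rewrite /L1norm [RHS]integral_mkcond; apply: eq_integral => x _.
  rewrite /patch; case: ifPn => [|]; rewrite ?notin_setE ?in_setE => Bx.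
    by rewrite ger0_norm ?extremal_ge0.
  by rewrite extremal_out // normr0.
have sumE : (\int[mu]_(x in B) (fe x)%:E +
    \int[mu]_(u in B) (omega (rho u theta))%:E = (omega h * muB)%:E)%E.
  rewrite -ge0_integralD //; first last.
  - by apply/measurable_EFinP; exact: measurable_modulus.
  - by move=> u _; rewrite lee_fin modulus_ge0 // rho_ge0.
  - by apply/measurable_EFinP; exact: measurable_funS measurable_extremal.
  - by move=> u _; rewrite lee_fin extremal_ge0.
  rewrite EFinM -ball_measureE -integral_cst //; apply: eq_integral => x.
  by rewrite in_setE => Bx; rewrite -EFinD extremal_in.
move: sumE; rewrite L1B integral_modulus_ballE.
case: (\int[mu]_(x in B) (fe x)%:E)%E => [r| |] //= [<-].
by congr EFin; ring.
Qed.

Lemma integrable_extremal : mu.-integrable setT (EFin \o fe).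
Proof.
apply/integrableP; split; first exact/measurable_EFinP/measurable_extremal.
have -> : (\int[mu]_x `|(EFin \o fe) x| = L1norm mu fe)%E by [].
by rewrite L1norm_extremal ltry.
Qed.

Lemma supnorm_extremal : supnorm fe = (omega h)%:E.
Proof.
apply/le_anti/andP; split.
  apply: ge_ereal_sup => _ [x _ <-].
  by rewrite lee_fin ger0_norm ?extremal_ge0 ?extremal_le.
apply: ereal_sup_ubound; exists theta => //.
by rewrite extremal_theta ger0_norm // modulus_ge0 // ltW.
Qed.

Lemma extremal_sharp : supnorm fe =
  (Hnorm rho omega fe * (muB^-1)%:E *
     \int[mu]_(u in B) (omega (rho u theta))%:E
   + L1norm mu fe * (muB^-1)%:E)%E.
Proof.
rewrite Hnorm_extremal integral_modulus_ballE L1norm_extremal supnorm_extremal.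
rewrite -!EFinM -EFinD; congr EFin.
by field; exact: lt0r_neq0 ball_measure_gt0.
Qed.

End SupnormEstimate.

Theorem corollary1 (R : realType) (d : measure_display) (X : measurableType d)
  (rho : X -> X -> R) (add : X -> X -> X) (theta : X)
  (mu : {measure set X -> \bar R}) (omega : R -> R)
  (* (X, rho) is a metric space *)
  (Hmetric : is_metric rho)
  (* mu is a Borel measure: the measurable sets are the Borel sets of rho *)
  (Hborel : (@measurable d X) = <<s rho_open rho >>)
  (* commutative monoid with neutral element theta *)
  (Hmonoid : is_comm_monoid add theta)
  (* translation invariance of mu *)
  (Htransl_meas : forall x Q, measurable Q -> measurable (translate add x Q))
  (Htransl : forall x Q, measurable Q -> mu (translate add x Q) = mu Q)
  (Htransl_int : forall (g : X -> R), 
     (forall y r, 0 < r -> mu.-integrable (rball rho y r) (EFin \o g)) ->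
     forall x h, 0 < h ->
       mu.-integrable (rball rho theta h) (fun u => (g (add x u))%:E) /\
       (\int[mu]_(u in rball rho theta h) (g (add x u))%:E =
        \int[mu]_(u in translate add x (rball rho theta h)) (g u)%:E)%E)
  (Hdist : forall x y, rho (add x y) x <= rho y theta)
  (Hball_pos : forall h, 0 < h -> (0 < mu (rball rho theta h))%E)
  (Hball_fin : forall h, 0 < h -> (mu (rball rho theta h) < +oo)%E)
  (Hball_nt : forall h, 0 < h -> rball rho theta h <> [set theta])
  (Hcont_int : forall g : X -> R, rho_continuous rho g ->
     forall x r, 0 < r -> mu.-integrable (rball rho x r) (EFin \o g))
  (* omega is a modulus of continuity *)
  (Homega : is_modulus omega)
  (h : R) (hpos : 0 < h) :
  let muB := fine (mu (rball rho theta h)) in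
  (forall f : X -> R, in_H rho omega f -> mu.-integrable setT (EFin \o f) ->
     (supnorm f <=
        Hnorm rho omega f * (muB^-1)%:E *
          \int[mu]_(u in rball rho theta h) (omega (rho u theta))%:E
        + L1norm mu f * (muB^-1)%:E)%E) /\
  (let fe := fun x => Num.max (omega h - omega (rho x theta)) 0 in
     in_H rho omega fe /\ mu.-integrable setT (EFin \o fe) /\
     supnorm fe =
       (Hnorm rho omega fe * (muB^-1)%:E *
          \int[mu]_(u in rball rho theta h) (omega (rho u theta))%:E
        + L1norm mu fe * (muB^-1)%:E)%E).
Proof.
have B_gt0 := Hball_pos h hpos.
have B_fin := Hball_fin h hpos.
have B_nt := Hball_nt h hpos.
split=> [|fe].
  exact: (supnorm_estimate Hmetric Hborel Homega Htransl_meas Htransl_int Hdist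
    hpos B_gt0 B_fin B_nt).
have -> : fe = extremal rho theta omega h by [].
split; first by rewrite /in_H (Hnorm_extremal Hmetric Homega hpos B_nt) ltry.
split; first exact: (integrable_extremal Hmetric Hborel Homega hpos B_fin).
exact: (extremal_sharp Hmetric Hborel Homega hpos B_gt0 B_fin B_nt).
Qed.
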